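(* Let $q$ be a prime power, let $k\geq 2$ and $r>4$ be integers, let $n=rk$, and let $e=\lceil r/4\rceil-1$. Let $\gamma\in\mathbb{F}_{q^n}$ be a root of an irreducible polynomial of degree $r$ over $\mathbb{F}_{q^k}$. For every $\delta\in\mathbb{F}_{q^k}$ and every integer $l$ with $2\leq l\leq e+1$, the $\mathbb{F}_q$-subspace $$U_{\delta,l}=\{a+u\gamma+(u^q+\delta u)\gamma^{l}\mid a\in\mathbb{F}_q,\ u\in\mathbb{F}_{q^k}\}$$ of $\mathbb{F}_{q^n}$ is a Sidon space.
   Context: An $\mathbb{F}_q$-subspace $U$ of $\mathbb{F}_{q^n}$ is a Sidon space if for all nonzero $a,b,c,d\in U$, $ab=cd$ implies $\{a\mathbb{F}_q,b\mathbb{F}_q\}=\{c\mathbb{F}_q,d\mathbb{F}_q\}$. *)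

From mathcomp Require Import all_boot all_order all_algebra all_field.
Set Implicit Arguments. Unset Strict Implicit. Unset Printing Implicit Defensive.
Import GRing.Theory.
Local Open Scope ring_scope.

(* Subfield F_{q^m} of a finite field L (of characteristic p, q a power of p):
   the elements fixed by x |-> x^(q^m). *)
Definition subF (L : finFieldType) (Q : nat) : {set L} := [set x : L | x ^+ Q == x].

Definition prime_power (q : nat) : Prop := exists p m : nat, prime p /\ (0 < m)%N /\ q = (p ^ m)%N.

Definition irreducible_over (L : fieldType) (S : {pred L}) (p : {poly L}) : Prop :=
  p \is a polyOver S /\ (1 < size p)%N /\
  forall a b : {poly L}, a \is a polyOver S -> b \is a polyOver S -> p = a * b ->
    size a = 1%N \/ size b = 1%N.

Definition is_subspace (L : finFieldType) (F U : {set L}) : Prop :=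
  0 \in U /\ (forall x y, x \in U -> y \in U -> x + y \in U) /\
  (forall t x, t \in F -> x \in U -> t * x \in U).

Definition line (L : finFieldType) (F : {set L}) (a : L) : {set L} :=
  [set x : L | [exists t in F, x == a * t]].

Definition sidon_space (L : finFieldType) (F U : {set L}) : Prop :=
  is_subspace F U /\
  forall a b c d : L, a \in U -> b \in U -> c \in U -> d \in U ->
    a != 0 -> b != 0 -> c != 0 -> d != 0 -> a * b = c * d ->
    [set line F a; line F b] = [set line F c; line F d].

Definition e_of (r : nat) : nat := ((r + 3) %/ 4).-1.

Definition U_dl (L : finFieldType) (q k : nat) (g delta : L) (l : nat) : {set L} :=
  [set x : L | [exists a in subF L q, exists u in subF L (q ^ k),
     x == a + u * g + (u ^+ q + delta * u) * g ^+ l]].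

(* Write the elements of U as x(a, u) = a + u g + phi(u) g^l with phi(u) = u^q + delta u.
   A product x(a, u) x(b, v) is the value at g of a polynomial of degree 2l < r over
   F_{q^k}; as g has degree r over F_{q^k}, the equation x y = z t forces equality of
   the coefficients: ab = cd, av + bu = cs + dw, uv = ws,
   u phi(v) + v phi(u) = w phi(s) + s phi(w) and phi(u) phi(v) = phi(w) phi(s).
   The last three give (phi(u) w - phi(w) u) (phi(u) s - phi(s) u) = 0, so after
   possibly exchanging z and t we get u^q w = w^q u, i.e. w = lam u with lam in F_q.
   The two remaining linear equations then show that z and t are F_q-multiples of
   x and y, in one order or the other.
   The fields F_q and F_{q^k} are handled as fixed fields of the Frobenius powers,
   which makes being defined over F_{q^k} stable under gcd and division. *)

From HB Require Import structures.
From mathcomp Require Import all_boot all_order all_algebra all_field.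
From mathcomp Require Import ring zify.
Set Implicit Arguments. Unset Strict Implicit. Unset Printing Implicit Defensive.
Import GRing.Theory.
Local Open Scope ring_scope.

Section FrobeniusPower.
Variables (R : comNzRingType) (n : nat).

(* The unused proof argument lets the rmorphism instance below be keyed on frobn. *)
Definition frobn of [pchar R].-nat n := fun x : R => x ^+ n.

Variable pcharRn : [pchar R].-nat n.

Fact frobn_is_nmod_morphism : nmod_morphism (frobn pcharRn).
Proof.
split=> [|x y]; last exact: exprDn_pchar.
by rewrite /frobn expr0n; case: n pcharRn.
Qed.

Fact frobn_is_monoid_morphism : monoid_morphism (frobn pcharRn).
Proof. by split=> [|x y]; [exact: expr1n | exact: exprMn]. Qed.

HB.instance Definition _ := GRing.isNmodMorphism.Build R R (frobn pcharRn)
  frobn_is_nmod_morphism.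
HB.instance Definition _ := GRing.isMonoidMorphism.Build R R (frobn pcharRn)
  frobn_is_monoid_morphism.

End FrobeniusPower.

Section FixedSubfield.
Variables (L : finFieldType) (sigma : {rmorphism L -> L}).

Definition fixed : {set L} := [set x | sigma x == x].

Lemma fixedP x : reflect (sigma x = x) (x \in fixed).
Proof. by rewrite inE; apply: eqP. Qed.

Lemma fixed0 : 0 \in fixed. Proof. by apply/fixedP; rewrite rmorph0. Qed.

Lemma fixedD x y : x \in fixed -> y \in fixed -> x + y \in fixed.
Proof. by move=> /fixedP sx /fixedP sy; apply/fixedP; rewrite rmorphD sx sy. Qed.

Lemma fixedB x y : x \in fixed -> y \in fixed -> x - y \in fixed.
Proof. by move=> /fixedP sx /fixedP sy; apply/fixedP; rewrite rmorphB sx sy. Qed.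

Lemma fixedM x y : x \in fixed -> y \in fixed -> x * y \in fixed.
Proof. by move=> /fixedP sx /fixedP sy; apply/fixedP; rewrite rmorphM sx sy. Qed.

Lemma fixedV x : x \in fixed -> x^-1 \in fixed.
Proof. by move=> /fixedP sx; apply/fixedP; rewrite fmorphV sx. Qed.

Lemma line_fixedZ c x : c \in fixed -> c != 0 -> line fixed (c * x) = line fixed x.
Proof.
move=> Fc c0; apply/setP => y; rewrite !inE; apply/existsP/existsP.
  move=> [t /andP[Ft /eqP->]]; exists (c * t).
  by rewrite fixedM //= mulrCA mulrA.
move=> [t /andP[Ft /eqP->]]; exists (c^-1 * t); rewrite fixedM ?fixedV //=.
by rewrite mulrACA mulfV ?mul1r.
Qed.

Lemma polyOver_fixedE p : (p \is a polyOver (mem fixed)) = (map_poly sigma p == p).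
Proof.
apply/(all_nthP 0)/eqP => [Fp | sp i _]; last by rewrite !inE -{2}sp coef_map.
apply/polyP => i; rewrite coef_map; apply/fixedP.
by have [/Fp | /(nth_default 0)->] := ltnP i (size p); rewrite ?fixed0.
Qed.

Lemma irreducible_over_min_size P Q g : irreducible_over (mem fixed) P ->
  root P g -> Q \is a polyOver (mem fixed) -> Q != 0 -> root Q g ->
  (size P <= size Q)%N.
Proof.
move=> [FP [_ irrP]] Pg FQ Q0 Qg; set G := gcdp P Q.
have FG : G \is a polyOver (mem fixed).
  by move: FP FQ; rewrite !polyOver_fixedE gcdp_map => /eqP-> /eqP->.
have FPG : P %/ G \is a polyOver (mem fixed).
  by move: FP FG; rewrite !polyOver_fixedE map_divp => /eqP-> /eqP->.
have G0 : G != 0 by rewrite gcdp_eq0 negb_and Q0 orbT.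
have ePG : P = G * (P %/ G) by rewrite mulrC divpK ?dvdp_gcdl.
have [sG1 | sPG1] := irrP _ _ FG FPG ePG.
  by have := root_size_gt1 (a := g) G0; rewrite sG1 /G root_gcd Pg Qg => /(_ isT).
have PG0 : P %/ G != 0 by rewrite -size_poly_eq0 sPG1.
by rewrite ePG size_mul // sPG1 addn1 dvdp_leq ?dvdp_gcdr.
Qed.
End FixedSubfield.

Section TwistedSpace.
Variables (L : finFieldType) (sigma tau : {rmorphism L -> L}) (delta gamma : L) (l : nat).
Local Notation F := (fixed sigma).
Local Notation K := (fixed tau).

Definition twist u := sigma u + delta * u.
Definition twisted_elt a u := a + u * gamma + twist u * gamma ^+ l.
(* Monomials written 'X^i throughout, so that coefXn reads off every coefficient. *)
Definition twisted_poly a u : {poly L} := a *: 'X^0 + u *: 'X^1 + twist u *: 'X^l.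
Definition twisted_space : {set L} :=
  [set x | [exists a in F, exists u in K, x == twisted_elt a u]].

Lemma twistD u v : twist (u + v) = twist u + twist v.
Proof. by rewrite /twist rmorphD mulrDr addrACA. Qed.

Lemma twistZ c u : c \in F -> twist (c * u) = c * twist u.
Proof. by move/fixedP => sc; rewrite /twist rmorphM sc mulrDr mulrCA. Qed.

Lemma twisted_eltD a u b v :
  twisted_elt a u + twisted_elt b v = twisted_elt (a + b) (u + v).
Proof. by rewrite /twisted_elt twistD; ring. Qed.

Lemma twisted_eltZ c a u : c \in F -> twisted_elt (c * a) (c * u) = c * twisted_elt a u.
Proof. by move=> Fc; rewrite /twisted_elt twistZ //; ring. Qed.

Lemma horner_twisted_poly a u : (twisted_poly a u).[gamma] = twisted_elt a u.
Proof. by rewrite /twisted_poly !hornerE. Qed.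

Lemma twisted_poly_mulE a u b v : twisted_poly a u * twisted_poly b v =
  (a * b) *: 'X^0 + (a * v + b * u) *: 'X^1 + (u * v) *: 'X^2
  + (a * twist v + b * twist u) *: 'X^l + (u * twist v + v * twist u) *: 'X^(l.+1)
  + (twist u * twist v) *: 'X^(l + l).
Proof.
rewrite /twisted_poly expr0 expr1 expr2 exprD exprSr -!mul_polyC; ring.
Qed.

Lemma coef_twisted_poly_mul a u b v i : (twisted_poly a u * twisted_poly b v)`_i =
  a * b * (i == 0)%:R + (a * v + b * u) * (i == 1)%:R + u * v * (i == 2)%:R
  + (a * twist v + b * twist u) * (i == l)%:R
  + (u * twist v + v * twist u) * (i == l.+1)%:R + twist u * twist v * (i == l + l)%:R.
Proof. by rewrite twisted_poly_mulE !coefD !coefZ !coefXn. Qed.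

Lemma twisted_elt0 a : twisted_elt a 0 = a.
Proof. by rewrite /twisted_elt /twist rmorph0 mulr0 addr0 !mul0r !addr0. Qed.

Lemma twist_ratio_fixed u w : u != 0 -> twist u * w = twist w * u -> w / u \in F.
Proof.
move=> u0 e; apply/fixedP/eqP; rewrite fmorph_div eqr_div ?fmorph_eq0 //.
apply/eqP/subr0_eq; transitivity (twist w * u - twist u * w); first by rewrite /twist; ring.
by rewrite e subrr.
Qed.

Hypotheses (FK : {subset F <= K}) (sigmaK : {homo sigma : x / x \in K}).
Hypothesis deltaK : delta \in K.

Lemma twist_fixed u : u \in K -> twist u \in K.
Proof. by move=> Ku; rewrite fixedD ?fixedM ?sigmaK. Qed.

Lemma map_twisted_poly a u : a \in K -> u \in K ->
  map_poly tau (twisted_poly a u) = twisted_poly a u.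
Proof.
move=> Ka Ku; have := twist_fixed Ku.
move: Ka Ku => /fixedP Ka /fixedP Ku /fixedP Ktu.
by rewrite !rmorphD /= !map_polyZ !map_polyXn Ka Ku Ktu.
Qed.

Lemma mem_twisted_space x : reflect
  (exists a u, [/\ a \in F, u \in K & x = twisted_elt a u]) (x \in twisted_space).
Proof.
apply: (iffP idP) => [|[a [u [Fa Ku ->]]]].
  by rewrite inE => /existsP[a /andP[Fa /existsP[u /andP[Ku /eqP->]]]]; exists a, u.
by rewrite inE; apply/existsP; exists a; rewrite Fa; apply/existsP; exists u; rewrite Ku /=.
Qed.

Lemma twisted_space_subspace : is_subspace F twisted_space.
Proof.
split; [|split].
- by apply/mem_twisted_space; exists 0, 0; rewrite twisted_elt0; split; rewrite ?fixed0.
- move=> _ _ /mem_twisted_space[a [u [Fa Ku ->]]] /mem_twisted_space[b [v [Fb Kv ->]]].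
  apply/mem_twisted_space; exists (a + b), (u + v).
  by rewrite twisted_eltD; split; rewrite ?fixedD.
move=> c _ Fc /mem_twisted_space[a [u [Fa Ku ->]]].
apply/mem_twisted_space; exists (c * a), (c * u); rewrite twisted_eltZ //.
by split; [exact: fixedM | exact: fixedM (FK Fc) Ku |].
Qed.

Hypothesis l_ge2 : (2 <= l)%N.

Section Coefficients.
Variables a u b v : L.
Local Notation tpm := (twisted_poly a u * twisted_poly b v).

Local Ltac coef_eval := rewrite coef_twisted_poly_mul;
  do ![case: eqP => /= ? ; try lia]; rewrite ?mulr0 ?mulr1 ?addr0 ?add0r.

Lemma coef0_twisted_poly_mul : tpm`_0 = a * b.
Proof. by coef_eval. Qed.

Lemma coef1_twisted_poly_mul : tpm`_1 = a * v + b * u.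
Proof. by coef_eval. Qed.

Lemma coef2_twisted_poly_mul :
  tpm`_2 = u * v + (l == 2)%:R * (a * twist v + b * twist u).
Proof. by coef_eval; rewrite ?mul0r ?mul1r ?addr0. Qed.

Lemma coefS_twisted_poly_mul : tpm`_l.+1 = u * twist v + v * twist u.
Proof. by coef_eval. Qed.

Lemma coefD_twisted_poly_mul : tpm`_(l + l) = twist u * twist v.
Proof. by coef_eval. Qed.

Lemma size_twisted_poly_mul : (size tpm <= (l + l).+1)%N.
Proof. by apply/leq_sizeP => i ?; coef_eval. Qed.

End Coefficients.

Lemma twisted_poly_mul_coef_eq a u b v c w d s :
  a \in F -> b \in F -> c \in F -> d \in F ->
  twisted_poly a u * twisted_poly b v = twisted_poly c w * twisted_poly d s ->
  [/\ a * b = c * d, a * v + b * u = c * s + d * w, u * v = w * s,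
      u * twist v + v * twist u = w * twist s + s * twist w
    & twist u * twist v = twist w * twist s].
Proof.
move=> Fa Fb Fc Fd e.
have coefE i : (twisted_poly a u * twisted_poly b v)`_i
             = (twisted_poly c w * twisted_poly d s)`_i by rewrite e.
have E1 : a * v + b * u = c * s + d * w.
  by have := coefE 1%N; rewrite !coef1_twisted_poly_mul addrC.
split=> //.
- by have := coefE 0%N; rewrite !coef0_twisted_poly_mul.
- have := coefE 2%N; rewrite !coef2_twisted_poly_mul.
  have comb x y z t : x \in F -> y \in F -> x * twist z + y * twist t = twist (x * z + y * t).
    by move=> Fx Fy; rewrite twistD !twistZ.
  by rewrite !comb // E1 => /addIr.
- by have := coefE l.+1; rewrite !coefS_twisted_poly_mul.
- by have := coefE (l + l)%N; rewrite !coefD_twisted_poly_mul.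
Qed.
Lemma twisted_lines_of_scaled a u b s c d lam : u != 0 -> lam \in F ->
  a \in F -> b \in F -> c \in F -> d \in F ->
  twisted_elt c (lam * u) != 0 -> twisted_elt d s != 0 ->
  a * b = c * d -> (a * lam - c) * s = (d * lam - b) * u ->
  [set line F (twisted_elt a u); line F (twisted_elt b (lam * s))] =
  [set line F (twisted_elt c (lam * u)); line F (twisted_elt d s)].
Proof.
move=> u0 Flam Fa Fb Fc Fd cw0 ds0 E0 E1.
have [Ac | Ac] := eqVneq (a * lam) c.
  have eb : b = d * lam.
    apply/esym/eqP; rewrite -subr_eq0.
    by move: E1; rewrite Ac subrr mul0r => /esym/eqP; rewrite mulf_eq0 (negbTE u0) orbF.
  have e1 : twisted_elt c (lam * u) = lam * twisted_elt a u.
    by rewrite -twisted_eltZ // -Ac mulrC.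
  have e2 : twisted_elt b (lam * s) = lam * twisted_elt d s.
    by rewrite -twisted_eltZ // eb mulrC.
  have lam0 : lam != 0 by apply: contraNneq cw0 => lam0; rewrite e1 lam0 mul0r.
  by rewrite e1 e2 !line_fixedZ.
have A0 : a * lam - c != 0 by rewrite subr_eq0.
have [kap Fkap es] : exists2 kap, kap \in F & s = kap * u.
  exists ((d * lam - b) / (a * lam - c)); first by rewrite fixedM ?fixedV ?fixedB ?fixedM.
  by apply: (mulfI A0); rewrite E1; field.
subst s.
have eb : b = d * lam - kap * (a * lam - c).
  apply: (mulIf u0); apply/subr0_eq.
  transitivity ((a * lam - c) * (kap * u) - (d * lam - b) * u); first by ring.
  by rewrite E1 subrr.
have ed : d = a * kap.
  apply/esym/(mulIf A0)/subr0_eq; transitivity (c * d - a * b); last by rewrite E0 subrr.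
  by rewrite eb; ring.
have e1 : twisted_elt d (kap * u) = kap * twisted_elt a u.
  by rewrite -twisted_eltZ // ed mulrC.
have e2 : twisted_elt b (lam * (kap * u)) = kap * twisted_elt c (lam * u).
  by rewrite -twisted_eltZ // eb ed; congr twisted_elt; ring.
have kap0 : kap != 0 by apply: contraNneq ds0 => kap0; rewrite e1 kap0 mul0r.
by rewrite e1 e2 !line_fixedZ // setUC.
Qed.

Lemma twisted_lines_of_ratio a u b v c w d s :
  u != 0 -> twist u * w = twist w * u ->
  a \in F -> b \in F -> c \in F -> d \in F ->
  twisted_elt c w != 0 -> twisted_elt d s != 0 ->
  a * b = c * d -> a * v + b * u = c * s + d * w -> u * v = w * s ->
  [set line F (twisted_elt a u); line F (twisted_elt b v)] =
  [set line F (twisted_elt c w); line F (twisted_elt d s)].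
Proof.
move=> u0 tw Fa Fb Fc Fd cw0 ds0 E0 E1 E2.
have [lam Flam ew] : exists2 lam, lam \in F & w = lam * u.
  by exists (w / u); [exact: twist_ratio_fixed | rewrite divfK].
have ev : v = lam * s by apply: (mulfI u0); rewrite E2 ew; ring.
subst w v; apply: twisted_lines_of_scaled => //.
apply/subr0_eq; transitivity (a * (lam * s) + b * u - (c * s + d * (lam * u))).
  by ring.
by rewrite E1 subrr.
Qed.

Lemma twist_cross_eq0 u v w s : u * v = w * s ->
  u * twist v + v * twist u = w * twist s + s * twist w ->
  twist u * twist v = twist w * twist s ->
  (twist u * w - twist w * u) * (twist u * s - twist s * u) = 0.
Proof.
move=> E2 E3 E4; transitivity (twist u ^+ 2 * (w * s)
  - twist u * u * (w * twist s + s * twist w) + u ^+ 2 * (twist w * twist s)).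
  by ring.
by rewrite -E2 -E3 -E4; ring.
Qed.

Lemma twisted_lines_eq_neq0 a u b v c w d s : u != 0 ->
  a \in F -> b \in F -> c \in F -> d \in F ->
  twisted_elt c w != 0 -> twisted_elt d s != 0 ->
  twisted_poly a u * twisted_poly b v = twisted_poly c w * twisted_poly d s ->
  [set line F (twisted_elt a u); line F (twisted_elt b v)] =
  [set line F (twisted_elt c w); line F (twisted_elt d s)].
Proof.
move=> u0 Fa Fb Fc Fd cw0 ds0 e.
have [E0 E1 E2 E3 E4] := twisted_poly_mul_coef_eq Fa Fb Fc Fd e.
have /eqP := twist_cross_eq0 E2 E3 E4; rewrite mulf_eq0 => /orP[] /eqP/subr0_eq tw.
  exact: twisted_lines_of_ratio.
rewrite [RHS]setUC; apply: twisted_lines_of_ratio => //.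
- by rewrite E0 mulrC.
- by rewrite E1 addrC.
- by rewrite E2 mulrC.
Qed.

Lemma twisted_lines_eq a u b v c w d s :
  a \in F -> b \in F -> c \in F -> d \in F ->
  twisted_elt a u != 0 -> twisted_elt b v != 0 ->
  twisted_elt c w != 0 -> twisted_elt d s != 0 ->
  twisted_poly a u * twisted_poly b v = twisted_poly c w * twisted_poly d s ->
  [set line F (twisted_elt a u); line F (twisted_elt b v)] =
  [set line F (twisted_elt c w); line F (twisted_elt d s)].
Proof.
move=> Fa Fb Fc Fd au0 bv0 cw0 ds0 e.
have [u0 | ?] := eqVneq u 0; last exact: twisted_lines_eq_neq0.
have [v0 | ?] := eqVneq v 0; last first.
  by rewrite setUC; apply: twisted_lines_eq_neq0; rewrite // [LHS]mulrC.
have [w0 | ?] := eqVneq w 0; last by apply: esym; apply: twisted_lines_eq_neq0.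
have [s0 | ?] := eqVneq s 0; last first.
  by rewrite [RHS]setUC; apply: esym; apply: twisted_lines_eq_neq0; rewrite // [LHS]mulrC.
subst u v w s; move: au0 bv0 cw0 ds0; rewrite !twisted_elt0 => a0 b0 c0 d0.
by rewrite -[a]mulr1 -[b]mulr1 -[c]mulr1 -[d]mulr1 !line_fixedZ.
Qed.

Theorem twisted_space_sidon (P : {poly L}) (r : nat) :
  irreducible_over (mem K) P -> size P = r.+1 -> root P gamma -> (l + l < r)%N ->
  sidon_space F twisted_space.
Proof.
move=> irrP sP Pg llr; split; first exact: twisted_space_subspace.
move=> x y z t /mem_twisted_space[a [u [Fa Ku ->]]] /mem_twisted_space[b [v [Fb Kv ->]]].
move=> /mem_twisted_space[c [w [Fc Kw ->]]] /mem_twisted_space[d [s [Fd Ks ->]]].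
move=> au0 bv0 cw0 ds0 e; apply: twisted_lines_eq => //; apply/eqP; rewrite -subr_eq0.
set Q := _ - _.
have KQ : Q \is a polyOver (mem K).
  by rewrite polyOver_fixedE !rmorphB !rmorphM /= !map_twisted_poly // FK.
have sQ : (size Q <= r)%N.
  rewrite (leq_trans (size_add _ _)) // size_opp geq_max.
  by rewrite !(leq_trans (size_twisted_poly_mul _ _ _ _)).
apply: contraTT sQ => Q0; rewrite -ltnNge -sP.
apply: irreducible_over_min_size irrP Pg KQ Q0 _.
by rewrite /root /Q hornerD hornerN !hornerM !horner_twisted_poly e subrr.
Qed.

End TwistedSpace.

Lemma expr_fixed_expn (R : pzSemiRingType) (x : R) (q k : nat) :
  x ^+ q = x -> x ^+ (q ^ k) = x.
Proof. by move=> xq; elim: k => [|k IHk]; rewrite ?expn0 ?expr1 // expnSr exprM IHk xq. Qed.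

Theorem lemma3p10 (q k r n : nat) (L : finFieldType)
  (hq : prime_power q) (hk : (2 <= k)%N) (hr : (4 < r)%N) (hn : n = (r * k)%N)
  (hL : #|L| = (q ^ n)%N)
  (gamma : L)
  (hgamma : exists P : {poly L},
      irreducible_over (mem (subF L (q ^ k))) P /\ size P = r.+1 /\ root P gamma) :
  forall (delta : L) (l : nat), delta \in subF L (q ^ k) ->
    (2 <= l)%N -> (l <= (e_of r).+1)%N ->
    sidon_space (subF L q) (U_dl q k gamma delta l).
Proof.
move=> delta l Kdelta l_ge2 l_le.
have [p [m [p_pr [_ def_q]]]] := hq.
have pcharL : p \in [pchar L].
  by apply: (card_finPcharP (n := (m * n)%N)); rewrite // hL def_q -expnM.
have qnat : [pchar L].-nat q by rewrite def_q pnatX (eq_pnat _ (pcharf_eq pcharL)) pnat_id.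
have Qnat : [pchar L].-nat (q ^ k)%N by rewrite pnatX qnat.
have [P [irrP [sP Pg]]] := hgamma.
apply: (twisted_space_sidon (sigma := frobn qnat) (tau := frobn Qnat)) irrP sP Pg _.
- by move=> x /fixedP xq; apply/fixedP; apply: expr_fixed_expn.
- by move=> x /fixedP xQ; apply/fixedP; rewrite /= /frobn exprAC; congr (_ ^+ _).
- exact: Kdelta.
- exact: l_ge2.
- by move: l_le; rewrite /e_of; lia.
Qed.
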